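(* Let $r\ge1$, $\ell\ge1$, $N\ge2r+1$, and let $w\in\mathcal B$ be a word of weight $N$ and level $\ell$. Then (a) $\partial_{2r+1}(w)\in\mathbb Q\langle\mathcal X\rangle_{2r+1}\otimes F_{\ell-1}\mathcal B$; and (b) $\partial_{2r+1}(w)\equiv\eta \pmod{\mathbb Q\langle\mathcal X\rangle_{2r+1}\otimes F_{\ell-2}\mathcal B}$ for some $\eta\in\mathcal B^1\otimes(\text{span of words in }\mathcal B\text{ of weight }N-2r-1\text{ and level exactly }\ell-1)$. Equivalently, the induced map $\partial^{(\ell)}_{2r+1}:\operatorname{gr}^F_\ell(\mathcal B)_N\to\mathbb Q\langle\mathcal X\rangle_{2r+1}\otimes\operatorname{gr}^F_{\ell-1}(\mathcal B)_{N-2r-1}$ takes values in $\mathcal B^1\otimes\operatorname{gr}^F_{\ell-1}(\mathcal B)_{N-2r-1}$.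
   Context: $\mathcal X=\{x_0,x_1\}$, $\mathbb Q\langle\mathcal X\rangle$ free noncommutative polynomials graded by weight (number of letters), weight-$n$ part $\mathbb Q\langle\mathcal X\rangle_n$. $\mathcal B$ is the span of all concatenations of $x_0x_1$ and $x_0x_0x_1$; the level of such a word is the number of blocks $x_0x_0x_1$ in it; $F_\ell\mathcal B$ is the span of words of level $\le\ell$ ($F_{-1}\mathcal B=0$), and $\operatorname{gr}^F_\ell\mathcal B=F_\ell\mathcal B/F_{\ell-1}\mathcal B$. $\mathcal B^1\subset\mathbb Q\langle\mathcal X\rangle$ is the span of the words $(x_0x_1)^ax_0x_0x_1(x_0x_1)^b$ ($a,b\ge0$) and $(x_0x_1)^nx_0$ ($n\ge0$). For letters: $I(x_1;f;x_0)=f$, $I(x_0;f;x_1)=S(f)$ with $S(\varepsilon_1\cdots\varepsilon_m)=(-1)^m\varepsilon_m\cdots\varepsilon_1$, $I(\varepsilon;f;\varepsilon)$ = coefficient of $\mathbf1$ in $f$ times $\mathbf1$. For a word $w=\varepsilon_1\cdots\varepsilon_N$, $\partial_{2r+1}(w)=\sum_{j=0}^{N-2r-1}I(\varepsilon_j;\varepsilon_{j+1}\cdots\varepsilon_{j+2r+1};\varepsilon_{j+2r+2})\otimes\varepsilon_1\cdots\varepsilon_j\varepsilon_{j+2r+2}\cdots\varepsilon_N$ with $\varepsilon_0=x_1$, $\varepsilon_{N+1}=x_0$, extended linearly. *)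

From mathcomp Require Import all_boot all_order all_algebra.
Set Implicit Arguments. Unset Strict Implicit. Unset Printing Implicit Defensive.
Import Order.TTheory GRing.Theory Num.Theory.

Definition x0 : bool := false.
Definition x1 : bool := true.
Definition word := seq bool.

(* Membership in (the spanning set of words of) B: a word is a concatenation of
   blocks x0x1 and x0x0x1 (the decomposition is unique). *)
Fixpoint inB (w : word) : bool :=
  match w with
  | [::] => true
  | false :: true :: s => inB s
  | false :: false :: true :: s => inB s
  | _ => false
  end.

(* Level: number of blocks x0x0x1 (meaningful for words in B). *)
Fixpoint level (w : word) : nat :=
  match w with
  | false :: true :: s => level s
  | false :: false :: true :: s => (level s).+1
  | _ => 0
  end.

(* Words spanning F_k B (k : int, so that F_{-1} B = 0). *)
Definition inF (k : int) (w : word) : Prop := inB w /\ ((level w)%:Z <= k)%R.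

Definition pw01 (a : nat) : word := flatten (nseq a [:: x0; x1]).

Definition inB1 (w : word) : Prop :=
  (exists a b, w = pw01 a ++ [:: x0; x0; x1] ++ pw01 b) \/
  (exists n, w = pw01 n ++ [:: x0]).

(* Elements of Q<X> are formal finite sums of (coefficient, word);
   elements of Q<X> (x) Q<X> are formal finite sums of (coefficient, (word, word)). *)
Definition ncpoly := seq (rat * word).
Definition tensor := seq (rat * (word * word)).

Definition tcoef (t : tensor) (u v : word) : rat :=
  (\sum_(x <- t | x.2 == (u, v)) x.1)%R.

(* A tensor (given by its coefficient function) lies in span(P) (x) span(Q),
   for P, Q sets of words (monomial subspaces). *)
Definition tsupp (P Q : word -> Prop) (f : word -> word -> rat) : Prop :=
  forall u v, f u v != 0%R -> P u /\ Q v.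

Definition Iw (a : bool) (u : word) (b : bool) : ncpoly :=
  if a == b then (if u == [::] then [:: (1%R, [::])] else [::])
  else if a == x1 then [:: (1%R, u)]      (* I(x1; f; x0) = f *)
  else [:: ((-1) ^+ size u, rev u)%R].     (* I(x0; f; x1) = S(f) *)

(* partial_{2r+1}(w) for a word w = e_1 ... e_N, with e_0 = x1, e_{N+1} = x0;
   the sum over j = 0 .. N-2r-1. *)
Definition dpart (r : nat) (w : word) : tensor :=
  let ext := x1 :: w ++ [:: x0] in
  flatten [seq [seq (c.1, (c.2, take j w ++ drop (j + r.*2.+1) w))
               | c <- Iw (nth x0 ext j) (take r.*2.+1 (drop j w))
                         (nth x0 ext (j + r.*2.+2))]
          | j <- iota 0 (size w - r.*2)].

From mathcomp Require Import all_boot all_order all_algebra.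
From mathcomp Require Import zify.
Set Implicit Arguments. Unset Strict Implicit. Unset Printing Implicit Defensive.
Import GRing.Theory.

(* A word w lies in B iff w is empty or ends with x1, and the bracketed word
   x1 w x0 contains neither x1x1 nor x0x0x0; moreover level w = |w| - 2 #x1(w).
   The j-th summand of d_{2r+1}(w) deletes a factor u of odd length 2r+1
   from w; it is non-zero only when the letters a, b flanking u differ, and
   then the gluing of the remaining parts creates no forbidden factor, so the
   remaining word stays in B.  Since a u b is itself admissible, the oriented
   factor c (u or its reversal) satisfies 2 #x1(c) <= 2r+1, so the level drops
   by 2r+1 - 2 #x1(c) >= 1, with equality exactly when #x1(c) = r, which forces
   c to be one of the spanning words of B^1. *)

Definition admissible (s : word) :=
  ~~ infix [:: x1; x1] s && ~~ infix [:: x0; x0; x0] s.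

Lemma admissible_cons2 a b t :
  admissible [:: a, b & t] =
  [&& ~~ (a && b), [|| a, b | head true t] & admissible (b :: t)].
Proof.
rewrite /admissible !infix_consl.
case: a; case: b; case: t => [|c t]; rewrite /= ?prefix0s ?orbF ?orbT ?andbF //=;
  try case: c => /=; rewrite ?prefix0s ?orbF ?orbT ?andbF ?andbT //=.
Qed.

Lemma admissible_catl s t : admissible (s ++ t) -> admissible s.
Proof.
by case/andP=> h1 h2; apply/andP; split; [apply: contra h1|apply: contra h2];
  apply: infix_catr.
Qed.

Lemma admissible_catr s t : admissible (s ++ t) -> admissible t.
Proof.
by case/andP=> h1 h2; apply/andP; split; [apply: contra h1|apply: contra h2];
  apply: infix_catl.
Qed.

Lemma admissible_behead a t : admissible (a :: t) -> admissible t.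
Proof. by rewrite -cat1s; apply: admissible_catr. Qed.

Lemma admissible_rev s : admissible (rev s) = admissible s.
Proof.
by rewrite /admissible -(infix_rev [:: x1; x1]) -(infix_rev [:: x0; x0; x0]) revK.
Qed.

Lemma admissible_glue s a b t :
  admissible (rcons s a) -> admissible (b :: t) -> a != b ->
  admissible (rcons s a ++ b :: t).
Proof.
move=> hs ht ab; elim: s hs => [|x [|y s] IH] /= hs.
- by rewrite admissible_cons2 ht andbT; clear -ab; move: ab; case: a; case: b.
- rewrite !admissible_cons2 ht andbT; rewrite admissible_cons2 in hs.
  by clear -ab hs; move: ab hs; case: a; case: b; case: x.
- rewrite admissible_cons2; rewrite admissible_cons2 in hs.
  case/and3P: hs => h1 h2 h3.
  by rewrite h1 IH //= andbT; case: s {IH h3} h2.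
Qed.

Lemma inB_admissible w :
  inB w = admissible (x1 :: w ++ [:: x0]) && (last x1 w == x1).
Proof.
have [n] := ubnP (size w); elim: n w => // n IH w Hs.
case: w Hs => [|[] w] Hs; first by rewrite admissible_cons2.
  by rewrite /= admissible_cons2.
case: w Hs => [|[] w] Hs //.
  by rewrite /= !admissible_cons2 /= IH //=; simpl in Hs; lia.
case: w Hs => [|[] w] Hs //.
  by rewrite /= !admissible_cons2 /= IH //=; simpl in Hs; lia.
by rewrite /= !admissible_cons2.
Qed.

Lemma level_inB w : inB w -> level w + (count id w).*2 = size w.
Proof.
have [n] := ubnP (size w); elim: n w => // n IH w Hs.
case: w Hs => [|[] w] Hs //; case: w Hs => [|[] w] Hs //.
  by move=> /= hB; have := IH w; simpl in Hs; move/(_ ltac:(lia) hB); lia.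
case: w Hs => [|[] w] Hs //.
by move=> /= hB; have := IH w; simpl in Hs; move/(_ ltac:(lia) hB); lia.
Qed.

Lemma count_admissible s : admissible s -> (count id s).*2 <= (size s).+1.
Proof.
have [n] := ubnP (size s); elim: n s => // n IH s Hs.
case: s Hs => [|[] s] Hs //.
  case: s Hs => [|[] s] Hs //; first by rewrite admissible_cons2.
  rewrite admissible_cons2 => /andP[_ /admissible_behead h] /=.
  by have := IH s; simpl in Hs; move/(_ ltac:(lia) h); lia.
move=> /admissible_behead h /=.
by have := IH s; simpl in Hs; move/(_ ltac:(lia) h); lia.
Qed.

Lemma count_bracketed s :
  admissible (x1 :: s ++ [:: x0]) -> (count id s).*2 <= size s.
Proof.
rewrite -cat1s catA => /admissible_catl /count_admissible /=; lia.
Qed.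

Lemma bracketed_pw01 k s : admissible (x1 :: s ++ [:: x0]) ->
  size s = k.*2 -> count id s = k -> s = pw01 k.
Proof.
elim: k s => [|k IH] [|a [|b s]] //=.
case: a; first by rewrite admissible_cons2.
case: b => [|h [hs] hc].
  by rewrite !admissible_cons2 /= => h [hs] [hc]; rewrite (IH s h hs hc).
have {}h : admissible ([:: x1, x0, x0 & s] ++ [:: x0]) by [].
have := count_admissible (admissible_behead (admissible_behead
  (admissible_behead (admissible_catl h)))).
by simpl in hc; lia.
Qed.

Lemma bracketed_inB1 r c : admissible (x1 :: c ++ [:: x0]) ->
  size c = r.*2.+1 -> count id c = r -> inB1 c.
Proof.
elim: r c => [|r IH] [|a [|b c]] //=.
  by case: a => // _ _ _; right; exists 0.
case: a; first by rewrite admissible_cons2.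
case: b.
  rewrite !admissible_cons2 /= => h [hs] [hc].
  case: (IH c h hs hc) => [[a' [b' ->]]|[n' ->]].
    by left; exists a'.+1, b'.
  by right; exists n'.+1.
case: c => [|[] c] //=; last by rewrite !admissible_cons2.
rewrite !admissible_cons2 /= => h [hs] hc.
by left; exists 0, r; rewrite /= (@bracketed_pw01 r c h) //; lia.
Qed.

Definition orient (a : bool) (u : word) : word := if a == x1 then u else rev u.

Lemma orient_bracketed a u b : admissible (a :: u ++ [:: b]) -> a != b ->
  admissible (x1 :: orient a u ++ [:: x0]).
Proof.
case: a; case: b => //= h _.
by rewrite -admissible_rev rev_cons rev_cat revK /= -cats1.
Qed.

Lemma inB_delete r p u s :
  inB (p ++ u ++ s) -> size u = r.*2.+1 -> last x1 p != head x0 s ->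
  [/\ inB (p ++ s), level (p ++ s) < level (p ++ u ++ s) &
      (level (p ++ s)).+1 = level (p ++ u ++ s) -> inB1 (orient (last x1 p) u)].
Proof.
move=> hB hu hab; move: (hB); rewrite inB_admissible => /andP[hadm hlast].
set a := last x1 p in hab *; set b := head x0 s in hab *.
set t := behead (s ++ [:: x0]).
have ht : s ++ [:: x0] = b :: t by rewrite /t /b; case: (s).
have split_w : x1 :: (p ++ u ++ s) ++ [:: x0] = rcons (belast x1 p) a ++ u ++ b :: t.
  by rewrite -ht /a -lastI /= -!catA.
rewrite split_w in hadm.
have hleft : admissible (rcons (belast x1 p) a) by apply: admissible_catl hadm.
have hright : admissible (b :: t) by apply: admissible_catr (admissible_catr hadm).
have hmid : admissible (a :: u ++ [:: b]).
  move: hadm; rewrite -cats1 -!catA /= => /admissible_catr.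
  by rewrite -[b :: t]cat1s catA -cat_cons => /admissible_catl.
have hBps : inB (p ++ s).
  rewrite inB_admissible; apply/andP; split.
    have -> : x1 :: (p ++ s) ++ [:: x0] = rcons (belast x1 p) a ++ b :: t.
      by rewrite -ht /a -lastI /= catA.
    exact: admissible_glue.
  move: hlast hab; rewrite /a /b; case: (s) => [|z s'] /=.
    by rewrite !cats0 => _; case: (last x1 p).
  by rewrite !last_cat.
have hc := orient_bracketed hmid hab.
have size_c : size (orient a u) = r.*2.+1 by rewrite /orient; case: eqP; rewrite ?size_rev.
have count_c : count id (orient a u) = count id u.
  by rewrite /orient; case: eqP; rewrite ?count_rev.
have := count_bracketed hc; rewrite size_c count_c => hcount.
have hdrop : level (p ++ u ++ s) + (count id u).*2 = level (p ++ s) + r.*2.+1.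
  have lw := level_inB hB; have lps := level_inB hBps.
  rewrite !size_cat !count_cat hu in lw lps; clear -lw lps; lia.
split=> [//||hlevel].
  by clear -hcount hdrop; lia.
apply: (bracketed_inB1 hc size_c); rewrite count_c; clear -hcount hdrop hlevel; lia.
Qed.

Lemma nth_last (y : bool) p t : nth x0 (y :: p ++ t) (size p) = last y p.
Proof. by elim: p y => [|z p IH] y //=; rewrite IH. Qed.

Lemma mem_dpart r w x : x \in dpart r w ->
  exists p u s c, [/\ w = p ++ u ++ s, size u = r.*2.+1,
    c \in Iw (last x1 p) u (head x0 s) & x = (c.1, (c.2, p ++ s))].
Proof.
case/flatten_mapP=> j; rewrite mem_iota => /andP[_ hj] /mapP[c hc ->].
set u := take r.*2.+1 (drop j w) in hc *.
set p := take j w; set s := drop (j + r.*2.+1) w.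
have hu : size u = r.*2.+1 by rewrite /u size_takel // size_drop; lia.
have hp : size p = j by rewrite /p size_takel //; lia.
have hw : w = p ++ u ++ s by rewrite /s addnC -drop_drop /u /p !cat_take_drop.
have ha : nth x0 (x1 :: w ++ [:: x0]) j = last x1 p.
  by rewrite {1}hw -catA -hp nth_last.
have hb : nth x0 (x1 :: w ++ [:: x0]) (j + r.*2.+2) = head x0 s.
  rewrite {1}hw (_ : j + r.*2.+2 = size (x1 :: p ++ u)); last first.
    by rewrite /= size_cat hp hu addnS.
  by rewrite -!catA catA -cat_cons nth_cat ltnn subnn; case: (s).
rewrite ha hb in hc.
by exists p, u, s, c.
Qed.

Lemma mem_Iw a u b c : c \in Iw a u b -> u != [::] ->
  a != b /\ c.2 = orient a u.
Proof.
rewrite /Iw /orient => + /negbTE un; case: eqP => [_|/eqP ab]; first by rewrite un.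
by case: eqP => _; rewrite inE => /eqP ->.
Qed.

Lemma dpart_support r w x : x \in dpart r w -> inB w ->
  [/\ size x.2.1 = r.*2.+1, inB x.2.2, size x.2.2 = size w - r.*2.+1,
      level x.2.2 < level w & (level x.2.2).+1 = level w -> inB1 x.2.1].
Proof.
case/mem_dpart=> p [u [s [c [hw hu hc ->]]]]; rewrite hw => hB /=.
have u_neq0 : u != [::] by apply/eqP => u0; rewrite u0 in hu.
have [hab ->] := mem_Iw hc u_neq0.
have [hBps hlt hB1] := inB_delete hB hu hab.
split=> //; last by rewrite !size_cat hu; clear; lia.
by rewrite /orient; case: eqP; rewrite ?size_rev.
Qed.

Lemma tcoef_neq0 t u v : tcoef t u v != 0%R -> exists2 x, x \in t & x.2 = (u, v).
Proof.
elim: t => [|y t IH]; first by rewrite /tcoef big_nil eqxx.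
rewrite /tcoef big_cons; case: (boolP (y.2 == (u, v))) => [/eqP e _|_ h].
  by exists y; rewrite ?in_cons ?eqxx.
by have [x hx ex] := IH h; exists x; rewrite // in_cons hx orbT.
Qed.

Lemma tcoef_filter (f : word -> bool) t u v :
  tcoef [seq x <- t | f x.2.2] u v = if f v then tcoef t u v else 0%R.
Proof.
rewrite /tcoef big_filter_cond; case: ifP => fv.
  by apply: eq_bigl => x; case: eqP => [-> /=|]; rewrite ?fv ?andbF.
by rewrite big1 // => x /andP[fx /eqP ex]; rewrite ex fv in fx.
Qed.

Theorem mainTheorem16 (r l N : nat) (w : word) :
  1 <= r -> 1 <= l -> r.*2.+1 <= N ->
  inB w -> size w = N -> level w = l ->
  tsupp (fun u => size u = r.*2.+1) (inF (l%:Z - 1)%R) (tcoef (dpart r w)) /\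
  exists eta : tensor,
    tsupp inB1 (fun v => [/\ inB v, size v = N - r.*2.+1 & level v = l - 1])
          (tcoef eta) /\
    tsupp (fun u => size u = r.*2.+1) (inF (l%:Z - 2)%R)
          (fun u v => (tcoef (dpart r w) u v - tcoef eta u v)%R).
Proof.
move=> _ _ _ hB <- <-.
have supp u v : tcoef (dpart r w) u v != 0%R ->
    [/\ size u = r.*2.+1, inB v, size v = size w - r.*2.+1,
        level v < level w & (level v).+1 = level w -> inB1 u].
  by case/tcoef_neq0=> [[c [u' v']] hx [<- <-]]; apply: dpart_support hx hB.
split=> [u v /supp[hu hv _ hlt _]|].
  by split=> //; split=> //; lia.
exists [seq x <- dpart r w | level x.2.2 == (level w).-1].
split=> u v; rewrite (tcoef_filter (fun v => level v == (level w).-1)).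
all: case: ifP => [/eqP hlev|/negbT/eqP hlev].
- by case/supp=> hu hv hs hlt hB1; split; [apply: hB1; lia | split=> //; lia].
- by rewrite eqxx.
- by rewrite subrr eqxx.
- by rewrite subr0 => /supp[hu hv _ hlt _]; split=> //; split=> //; lia.
Qed.
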